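(* Let $\mathbf{A}$ be an $n\times k$ matrix with i.i.d. $\mathrm{Bernoulli}(p)$ entries. Let $\mathcal{S}$ be a set of size $m>k$ drawn uniformly at random from $[n]$, let $\mathbf{A}_{\mathcal{S}}$ be the $m\times k$ submatrix formed by the rows of $\mathbf{A}$ indexed by $\mathcal{S}$, and let $\alpha=\max(p,1-p)$. Then $$\mathbb{P}\left[\mathrm{rank}_{\mathbb{R}}(\mathbf{A}_{\mathcal{S}})=k\right]\ge 1-\min\left(1,k\cdot\alpha^{m-k+1}\right).$$ *)

From HB Require Import structures.
From mathcomp Require Import all_boot all_order all_algebra.
From mathcomp Require Import reals.
Set Implicit Arguments. Unset Strict Implicit. Unset Printing Implicit Defensive.
Import Order.TTheory GRing.Theory Num.Theory.
Local Open Scope ring_scope.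

Definition bern_weight (R : realType) (p : R) (n k : nat) (A : 'M[bool]_(n, k)) : R :=
  \prod_(i < n) \prod_(j < k) (if A i j then p else 1 - p).

Definition row_submx (R : realType) (n k : nat) (A : 'M[bool]_(n, k))
  (S : {set 'I_n}) : 'M[R]_(#|S|, k) :=
  \matrix_(i < #|S|, j < k) ((A (@enum_val _ (mem S) i) j)%:R : R).

(* P[ rank_R(A_S) = k ] where A ~ i.i.d. Bernoulli(p) (n x k) and S is drawn
   uniformly among the m-subsets of [n], independently of A. *)
Definition prob_full_col_rank (R : realType) (p : R) (n k m : nat) : R :=
  \sum_(A : 'M[bool]_(n, k))
    \sum_(S : {set 'I_n} | #|S| == m)
      bern_weight p A * ('C(n, m)%:R)^-1 * ((\rank (row_submx R A S) == k)%:R).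

From HB Require Import structures.
From mathcomp Require Import all_boot all_order all_algebra.
From mathcomp Require Import reals zify.
Import Order.TTheory GRing.Theory Num.Theory.
Local Open Scope ring_scope.

(* Fix the row set S, of size s >= k.  The columns of A_S are independent
   Bernoulli vectors of {0,1}^s, and if A_S is rank deficient then some column
   j lies in the span of the columns before it, a subspace of dimension at
   most j.  A subspace of dimension r is determined by r pivot coordinates, so
   two of its vectors agreeing on the other s - r coordinates coincide; hence,
   conditionally on the other columns, column j lands in it with probability at
   most alpha^(s - j).  A union bound over j < k gives k alpha^(s - k + 1), and
   averaging over S keeps the bound. *)

Section RowSpace.
Variable F : fieldType.

Lemma rowspace_determining_coords r s (V : 'M[F]_(r, s)) :
  exists D : {set 'I_s}, (#|D| <= \rank V)%N /\
    forall v : 'rV_s, (v <= V)%MS -> (forall t, t \in D -> v 0 t = 0) -> v = 0.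
Proof.
(* The pivots: the indices of a maximal free family of columns of [V]. *)
pose f := maxrankfun V^T.
exists [set f i | i in 'I_(\rank V^T)]; split.
  by rewrite -(mxrank_tr V) (leq_trans (leq_imset_card _ _)) // card_ord.
move=> _ /submxP[x ->] vanish.
have /submxP[C defVT] : (V^T <= rowsub f V^T)%MS by rewrite eq_maxrowsub.
have subV_x : rowsub f V^T *m x^T = 0.
  rewrite mul_rowsub_mx -trmx_mul; apply/matrixP => i j; rewrite !mxE (ord1 j).
  by rewrite -[RHS](vanish (f i)) ?imset_f // [RHS]mxE.
by apply: trmx_inj; rewrite trmx0 trmx_mul defVT -mulmxA subV_x mulmx0.
Qed.

Variables k s : nat.
Implicit Type N : 'M[F]_(k, s).

Definition prefix_rows (j : nat) N : 'M[F]_(k, s) := pid_mx j *m N.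

Lemma prefix_rowsE j N i l :
  prefix_rows j N i l = if (i < j)%N then N i l else 0.
Proof.
rewrite !mxE (bigD1 i) //= big1 ?addr0 => [|t /negPf neq_ti].
  by rewrite !mxE eqxx /=; case: (i < j)%N; rewrite ?mul1r ?mul0r.
by rewrite !mxE val_eqE eq_sym neq_ti mul0r.
Qed.

Lemma mxrank_prefix_rows j N : (\rank (prefix_rows j N) <= j)%N.
Proof.
apply: leq_trans (mxrankM_maxl _ _) _.
by rewrite -pid_mx_minv rank_pid_mx ?geq_minl ?geq_minr.
Qed.

Lemma mxrank_prefix_rowsS {j : 'I_k} {N} : ~~ (row j N <= prefix_rows j N)%MS ->
  (\rank (prefix_rows j N) < \rank (prefix_rows j.+1 N))%N.
Proof.
move=> row_new.
have sub_prefix : (prefix_rows j N <= prefix_rows j.+1 N)%MS.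
  have pid_mxS : pid_mx j = pid_mx j *m (pid_mx j.+1 : 'M[F]_k) :> 'M_k.
    by rewrite mul_pid_mx (minn_idPl (leqnSn j)) (minn_idPr (ltnW (ltn_ord j))).
  by rewrite /prefix_rows pid_mxS -mulmxA submxMl.
have row_in_prefix : (row j N <= prefix_rows j.+1 N)%MS.
  suff -> : row j N = row j (prefix_rows j.+1 N) by exact: row_sub.
  by apply/rowP => l; rewrite mxE [RHS]mxE prefix_rowsE ltnSn.
have [le_rank eq_rank] := mxrank_leqif_sup sub_prefix.
rewrite ltn_neqAle le_rank eq_rank andbT.
by apply: contra row_new; apply: submx_trans row_in_prefix.
Qed.

Lemma row_free_prefix_rows N :
  (forall j : 'I_k, ~~ (row j N <= prefix_rows j N)%MS) -> row_free N.
Proof.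
move=> rows_new.
suff le_j_rank j : (j <= k)%N -> (j <= \rank (prefix_rows j N))%N.
  by rewrite /row_free eqn_leq rank_leq_row -[X in \rank X]mul1mx -pid_mx_1 le_j_rank.
elim: j => [|j IHj] // lt_jk.
exact: leq_ltn_trans (IHj (ltnW lt_jk)) (mxrank_prefix_rowsS (rows_new (Ordinal lt_jk))).
Qed.

End RowSpace.

Arguments rowspace_determining_coords {F r s} V.
Arguments prefix_rows {F k s} j N.

Lemma rank_deficient_le_sum_prefix (F : numFieldType) k s (N : 'M[F]_(k, s)) :
  ((\rank N != k)%:R : F) <= \sum_(j < k) ((row j N <= prefix_rows j N)%MS)%:R.
Proof.
have [/existsP[j row_j]|] := boolP [exists j : 'I_k, (row j N <= prefix_rows j N)%MS].
  rewrite (bigD1 j) //= row_j -[X in X <= _]addr0 lerD ?ler_nat ?leq_b1 //.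
  by apply: sumr_ge0 => i _; apply: ler0n.
rewrite negb_exists => /forallP/row_free_prefix_rows/eqP ->; rewrite eqxx.
by apply: sumr_ge0 => i _; apply: ler0n.
Qed.

Lemma mean_over_draws_ge (R : numFieldType) (T : finType) m (f : {set T} -> R) c :
  (m <= #|T|)%N -> (forall S : {set T}, #|S| = m -> c <= f S) ->
  c <= \sum_(S : {set T} | #|S| == m) f S / 'C(#|T|, m)%:R.
Proof.
move=> le_m_T c_le_f.
have binom_neq0 : ('C(#|T|, m)%:R : R) != 0 by rewrite pnatr_eq0 -lt0n bin_gt0.
apply: le_trans (_ : \sum_(S : {set T} | #|S| == m) c / 'C(#|T|, m)%:R <= _).
  rewrite (eq_bigl (mem [set S : {set T} | #|S| == m])); last by move=> S /=; rewrite inE.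
  by rewrite sumr_const card_draws -(mulr_natr (c / _)) divfK.
apply: ler_sum => S /eqP card_S.
by rewrite ler_wpM2r ?invr_ge0 ?ler0n ?c_le_f.
Qed.

Section Bernoulli.
Variables (R : realType) (p : R).
Hypothesis p01 : 0 <= p <= 1.

Definition bern (b : bool) : R := if b then p else 1 - p.
Definition bern_max : R := Num.max p (1 - p).
Definition bern_prod {X : finType} (f : {ffun X -> bool}) : R := \prod_x bern (f x).

Lemma bern_ge0 b : 0 <= bern b.
Proof. by case/andP: p01 => p_ge0 p_le1; case: b; rewrite /bern ?subr_ge0. Qed.

Lemma bern_le_max b : bern b <= bern_max.
Proof. by case: b; rewrite /bern /bern_max le_max lexx ?orbT. Qed.

Lemma bern_max_ge0 : 0 <= bern_max.
Proof. exact: le_trans (bern_ge0 true) (bern_le_max true). Qed.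

Lemma bern_max_le1 : bern_max <= 1.
Proof. by case/andP: p01 => p_ge0 p_le1; rewrite ge_max p_le1 lerBlDr lerDl. Qed.

Lemma bern_max_exp_le e e' : (e <= e')%N -> bern_max ^+ e' <= bern_max ^+ e.
Proof. exact: (ler_wiXn2l bern_max_ge0 bern_max_le1). Qed.

Lemma sum_bern : \sum_b bern b = 1.
Proof. by rewrite big_bool /bern /= addrC subrK. Qed.

Lemma sum_bern_prod {X : finType} : \sum_(f : {ffun X -> bool}) bern_prod f = 1.
Proof.
rewrite /bern_prod -(bigA_distr_bigA (fun _ b => bern b)).
by apply: big1 => x _; apply: sum_bern.
Qed.

Definition bern_marginal {X : finType} (T : {set X}) (f : {ffun X -> bool}) : R :=
  \prod_(x | x \notin T) bern (f x).

Lemma bern_prod_le_marginal {X : finType} (T : {set X}) (f : {ffun X -> bool}) :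
  bern_prod f <= bern_max ^+ #|T| * bern_marginal T f.
Proof.
rewrite /bern_prod (bigID (mem T)) /=; apply: ler_wpM2r.
  by apply: prodr_ge0 => x _; apply: bern_ge0.
by rewrite -prodr_const; apply: ler_prod => x _; rewrite bern_ge0 bern_le_max.
Qed.

(* Summing the marginal over functions that agree off [T] is summing a
   probability over distinct outcomes: encode [f] by [f] zeroed on [T], and
   weigh the coordinates in [T] by the point mass at [false]. *)
Lemma sum_bern_marginal_le1 {X : finType} (E : pred {ffun X -> bool}) (T : {set X}) :
  (forall f g, E f -> E g -> (forall x, x \notin T -> f x = g x) -> f = g) ->
  \sum_(f | E f) bern_marginal T f <= 1.
Proof.
move=> agree_eq.
pose erase (f : {ffun X -> bool}) := [ffun x => if x \in T then false else f x].
pose w (x : X) (b : bool) : R := if x \in T then (~~ b)%:R else bern b.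
have w_ge0 x b : 0 <= w x b by rewrite /w; case: (x \in T); rewrite ?bern_ge0.
have marginalE f : bern_marginal T f = \prod_x w x (erase f x).
  rewrite /bern_marginal big_mkcond; apply: eq_bigr => x _.
  by rewrite /w ffunE; case: (x \in T).
have erase_inj : {in [set f | E f] &, injective erase}.
  move=> f g; rewrite !inE => Ef Eg /ffunP erase_fg.
  apply: agree_eq => // x x_notT.
  by have := erase_fg x; rewrite !ffunE (negPf x_notT).
under eq_bigr do rewrite marginalE.
rewrite (eq_bigl (mem [set f | E f])); last by move=> f /=; rewrite inE.
rewrite -(big_imset (fun g : {ffun X -> bool} => \prod_x w x (g x))) //=.
have sum_w : \sum_(g : {ffun X -> bool}) \prod_x w x (g x) = 1.
  rewrite -(bigA_distr_bigA w); apply: big1 => x _; rewrite /w.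
  by case: (x \in T); rewrite ?sum_bern // big_bool /= add0r.
rewrite -[X in _ <= X]sum_w [X in _ <= X](bigID (mem (erase @: [set f | E f]))) /=.
by rewrite lerDl; apply: sumr_ge0 => g _; apply: prodr_ge0.
Qed.

Lemma sum_bern_prod_determined_le {X : finType}
    (E : pred {ffun X -> bool}) (T : {set X}) :
  (forall f g, E f -> E g -> (forall x, x \notin T -> f x = g x) -> f = g) ->
  \sum_(f | E f) bern_prod f <= bern_max ^+ #|T|.
Proof.
move=> agree_eq; apply: le_trans (ler_sum _ (fun f _ => bern_prod_le_marginal T f)) _.
rewrite -mulr_sumr -[X in _ <= X]mulr1 ler_wpM2l ?exprn_ge0 ?bern_max_ge0 //.
exact: sum_bern_marginal_le1.
Qed.

Variables n k : nat.
Implicit Types (A B : 'M[bool]_(n, k)) (S : {set 'I_n}) (c : {ffun 'I_n -> bool}).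

Lemma bern_weight_ge0 A : 0 <= bern_weight p A.
Proof. by apply: prodr_ge0 => i _; apply: prodr_ge0 => l _; apply: bern_ge0. Qed.

Definition restrict_row S c : 'rV[R]_#|S| := \row_t (c (@enum_val _ (mem S) t))%:R.

Lemma sum_bern_prod_in_rowspace_le S r (V : 'M[R]_(r, #|S|)) :
  \sum_(c | (restrict_row S c <= V)%MS) bern_prod c <= bern_max ^+ (#|S| - \rank V).
Proof.
have [D [card_D determined]] := rowspace_determining_coords V.
pose T := [set @enum_val _ (mem S) t | t in ~: D].
have card_T : #|T| = (#|S| - #|D|)%N.
  rewrite card_imset; last exact: enum_val_inj.
  by rewrite -[X in (X - _)%N](card_ord #|S|) -(cardsC D) addKn.
apply: le_trans (sum_bern_prod_determined_le _ T _) _; last first.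
  by rewrite card_T bern_max_exp_le // leq_sub2l.
move=> c c' Vc Vc' agree.
have eq_rows : restrict_row S c = restrict_row S c'.
  apply/eqP; rewrite -subr_eq0; apply/eqP/determined.
    by rewrite addmx_sub // eqmx_opp.
  move=> t t_D; rewrite !mxE agree ?subrr //.
  apply/imsetP => -[t' t'_notD /enum_val_inj eq_tt'].
  by rewrite -eq_tt' in_setC t_D in t'_notD.
apply/ffunP => x; have [/imsetP[t _ ->]|/agree//] := boolP (x \in T).
have /rowP/(_ t) := eq_rows; rewrite !mxE => /eqP; rewrite eqr_nat.
by case: (c _) (c' _) => -[].
Qed.

Definition set_col B (j : 'I_k) c : 'M[bool]_(n, k) :=
  \matrix_(i, l) if l == j then c i else B i l.

Lemma big_set_col (G : 'M[bool]_(n, k) -> R) j :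
  \sum_A G A =
  \sum_(B : 'M[bool]_(n, k) | [forall i, ~~ B i j]) \sum_c G (set_col B j c).
Proof.
rewrite (partition_big (fun A => [ffun i => A i j]) xpredT) //= exchange_big /=.
apply: eq_bigr => c _.
rewrite (reindex_onto (fun B => set_col B j c) (fun A => set_col A j [ffun=> false]))
  /=; last first.
  move=> A /eqP col_A; apply/matrixP => i l; rewrite !mxE.
  by case: eqP => [->|//]; rewrite -col_A ffunE.
apply: eq_bigl => B.
have -> : [ffun i => set_col B j c i j] = c by apply/ffunP => i; rewrite ffunE mxE eqxx.
rewrite eqxx /=; apply/eqP/forallP => [/matrixP B_j i | B_j].
  by have := B_j i j; rewrite !mxE eqxx ffunE => <-.
apply/matrixP => i l; rewrite !mxE; case: eqP => [->|//].
by rewrite ffunE; case: (B i j) (B_j i).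
Qed.

Definition bern_weight_off_col B (j : 'I_k) : R :=
  \prod_i \prod_(l | l != j) bern (B i l).

Lemma bern_weight_off_col_ge0 B j : 0 <= bern_weight_off_col B j.
Proof. by apply: prodr_ge0 => i _; apply: prodr_ge0 => l _; apply: bern_ge0. Qed.

Lemma bern_weight_set_col B j c :
  bern_weight p (set_col B j c) = bern_prod c * bern_weight_off_col B j.
Proof.
rewrite /bern_weight /bern_prod -big_split; apply: eq_bigr => i _ /=.
rewrite (bigD1 j) //= mxE eqxx; congr (_ * _).
by apply: eq_bigr => l /negPf l_neq_j; rewrite mxE l_neq_j.
Qed.

Lemma sum_bern_weight_set_col (G : 'M[bool]_(n, k) -> R) j :
  \sum_A bern_weight p A * G A =
  \sum_(B : 'M[bool]_(n, k) | [forall i, ~~ B i j])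
     bern_weight_off_col B j * \sum_c bern_prod c * G (set_col B j c).
Proof.
rewrite (big_set_col _ j); apply: eq_bigr => B _; rewrite mulr_sumr.
by apply: eq_bigr => c _; rewrite bern_weight_set_col mulrCA !mulrA.
Qed.

Lemma sum_bern_weight : \sum_(A : 'M[bool]_(n, k)) bern_weight p A = 1.
Proof.
pose entries (A : 'M[bool]_(n, k)) : {ffun 'I_n * 'I_k -> bool} := [ffun x => A x.1 x.2].
have entries_bij : bijective entries.
  exists (fun f : {ffun 'I_n * 'I_k -> bool} => \matrix_(i, l) f (i, l)) => [A | f].
    by apply/matrixP => i l; rewrite mxE ffunE.
  by apply/ffunP => -[i l]; rewrite ffunE mxE.
rewrite -(sum_bern_prod (X := ('I_n * 'I_k)%type)) (reindex entries) /=.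
  apply: eq_bigr => A _; rewrite /bern_weight /bern_prod pair_big.
  by apply: eq_bigr => -[i l] _; rewrite ffunE.
by apply: onW_bij.
Qed.

Lemma sum_bern_weight_off_col j :
  \sum_(B : 'M[bool]_(n, k) | [forall i, ~~ B i j]) bern_weight_off_col B j = 1.
Proof.
rewrite -[RHS]sum_bern_weight (big_set_col _ j); apply: eq_bigr => B _.
rewrite -[LHS]mul1r -(sum_bern_prod (X := 'I_n)) mulr_suml.
by apply: eq_bigr => c _; rewrite bern_weight_set_col.
Qed.

Definition submx_cols A S : 'M[R]_(k, #|S|) := (row_submx R A S)^T.

Lemma prob_col_in_prefix_span_le S (j : 'I_k) :
  \sum_A bern_weight p A *
      ((row j (submx_cols A S) <= prefix_rows j (submx_cols A S))%MS)%:R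
    <= bern_max ^+ (#|S| - j).
Proof.
have row_set_col B c : row j (submx_cols (set_col B j c) S) = restrict_row S c.
  by apply/rowP => t; rewrite !mxE eqxx.
have prefix_set_col B c :
    prefix_rows j (submx_cols (set_col B j c) S) = prefix_rows j (submx_cols B S).
  apply/matrixP => i t; rewrite !prefix_rowsE; case: ltnP => // lt_ij.
  by rewrite !mxE (ltn_eqF lt_ij : (i == j) = false).
rewrite (sum_bern_weight_set_col _ j).
apply: le_trans (_ : \sum_(B : 'M[bool]_(n, k) | [forall i, ~~ B i j])
    bern_weight_off_col B j * bern_max ^+ (#|S| - j) <= _); last first.
  by rewrite -mulr_suml sum_bern_weight_off_col mul1r.
apply: ler_sum => B _; rewrite ler_wpM2l ?bern_weight_off_col_ge0 //.
under eq_bigr do rewrite row_set_col prefix_set_col mulr_natr mulrb.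
rewrite -big_mkcond; apply: le_trans (sum_bern_prod_in_rowspace_le _ _ _) _.
by rewrite bern_max_exp_le // leq_sub2l // mxrank_prefix_rows.
Qed.

Lemma prob_full_rank_on_set_ge S : (k <= #|S|)%N ->
  1 - k%:R * bern_max ^+ (#|S| - k + 1)
    <= \sum_(A : 'M[bool]_(n, k)) bern_weight p A * (\rank (row_submx R A S) == k)%:R.
Proof.
move=> le_k_S.
have -> : \sum_(A : 'M[bool]_(n, k)) bern_weight p A * (\rank (row_submx R A S) == k)%:R =
    1 - \sum_(A : 'M[bool]_(n, k)) bern_weight p A * (\rank (submx_cols A S) != k)%:R.
  rewrite -[X in X - _]sum_bern_weight -sumrB; apply: eq_bigr => A _.
  by rewrite mxrank_tr; case: eqP; rewrite ?mulr1 ?mulr0 ?subr0 ?subrr.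
rewrite lerD2l lerN2.
apply: le_trans (_ : \sum_(A : 'M[bool]_(n, k)) \sum_(j < k) bern_weight p A *
    ((row j (submx_cols A S) <= prefix_rows j (submx_cols A S))%MS)%:R <= _).
  apply: ler_sum => A _; rewrite -mulr_sumr ler_wpM2l ?bern_weight_ge0 //.
  exact: rank_deficient_le_sum_prefix.
rewrite exchange_big /=.
apply: le_trans (_ : \sum_(j < k) bern_max ^+ (#|S| - k + 1) <= _); last first.
  by rewrite sumr_const card_ord mulr_natl.
apply: ler_sum => j _; apply: le_trans (prob_col_in_prefix_span_le S j) _.
by rewrite bern_max_exp_le //; have := ltn_ord j; lia.
Qed.

End Bernoulli.

Theorem lemma4 (R : realType) (p : R) (n k m : nat) :
  0 <= p <= 1 -> (k < m)%N -> (m <= n)%N ->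
  prob_full_col_rank p n k m >=
    1 - Num.min 1 (k%:R * (Num.max p (1 - p)) ^+ (m - k + 1)).
Proof.
move=> p01 lt_km le_mn; set x := k%:R * _.
have prob_ge0 : 0 <= prob_full_col_rank p n k m.
  apply: sumr_ge0 => A _; apply: sumr_ge0 => S _.
  by rewrite !mulr_ge0 ?bern_weight_ge0 ?invr_ge0 ?ler0n.
have prob_ge : 1 - x <= prob_full_col_rank p n k m.
  rewrite /prob_full_col_rank exchange_big /= -[n in 'C(n, m)](card_ord n).
  under eq_bigr do under eq_bigr do rewrite mulrAC.
  under eq_bigr do rewrite -mulr_suml.
  apply: mean_over_draws_ge; first by rewrite card_ord.
  move=> S card_S; rewrite /x -card_S; apply: prob_full_rank_on_set_ge => //.
  by rewrite card_S ltnW.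
by case: (lerP 1 x); rewrite ?subrr.
Qed.
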